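(* Let $\lambda=2\cos(\pi/5)$ and let $H_5$ be the subgroup of $SL(2,\mathbb R)$ generated by $S=\begin{pmatrix}0&1\\-1&0\end{pmatrix}$ and $T=\begin{pmatrix}1&\lambda\\0&1\end{pmatrix}$. Let $\tau,\pi\in\mathbb Z[\lambda]$ be nonzero and let $a$ and $b$ be the smallest positive rational integers in the ideals $(\tau)$ and $(\pi)$ respectively. Suppose $\gcd(a,b)=1$. Then $H_5=H(\tau)H(\pi)$ and $[H_5:H(\tau\pi)]=[H_5:H(\tau)]\,[H_5:H(\pi)]$.
   Context: For $\alpha\in\mathbb Z[\lambda]$, $H(\alpha)=\{(a_{ij})\in H_5 : a_{11}-1,\ a_{22}-1,\ a_{12},\ a_{21}\in \alpha\mathbb Z[\lambda]\}$ is the principal congruence subgroup of level $\alpha$. *)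

From HB Require Import structures.
From mathcomp Require Import all_boot all_order all_algebra.
From mathcomp Require Import all_classical all_reals all_analysis.
Set Implicit Arguments. Unset Strict Implicit. Unset Printing Implicit Defensive.
Import Order.TTheory GRing.Theory Num.Theory.
Local Open Scope ring_scope.

Section Hecke.
Variable R : realType.

Definition lam : R := 2 * cos (pi / 5%:R).

Definition inZl (x : R) : Prop := exists a b : int, x = a%:~R + b%:~R * lam.

Definition inIdeal (alpha x : R) : Prop := exists z, inZl z /\ x = alpha * z.

Definition Smat : 'M[R]_2 := \matrix_(i < 2, j < 2)
  (if (i == 0) && (j == 0) then 0 else if (i == 0) then 1
   else if (j == 0) then -1 else 0).
Definition Tmat : 'M[R]_2 := \matrix_(i < 2, j < 2)
  (if (i == 0) && (j == 0) then 1 else if (i == 0) then lam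
   else if (j == 0) then 0 else 1).

Definition gens (g : 'M[R]_2) : Prop :=
  g = Smat \/ g = invmx Smat \/ g = Tmat \/ g = invmx Tmat.

Inductive H5 : 'M[R]_2 -> Prop :=
| H5_one : H5 1%:M
| H5_mul g M : gens g -> H5 M -> H5 (g *m M).

Definition Hcong (alpha : R) (M : 'M[R]_2) : Prop :=
  H5 M /\ inIdeal alpha (M 0 0 - 1) /\ inIdeal alpha (M 1 1 - 1)
       /\ inIdeal alpha (M 0 1) /\ inIdeal alpha (M 1 0).

Definition least_pos_int (alpha : R) (a : nat) : Prop :=
  (0 < a)%N /\ inIdeal alpha a%:R /\
  forall m : nat, (0 < m)%N -> inIdeal alpha m%:R -> (a <= m)%N.

Definition coset_reps (G H : 'M[R]_2 -> Prop) (s : seq 'M[R]_2) : Prop :=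
  (forall r, r \in s -> G r) /\
  (forall i j, (i < size s)%N -> (j < size s)%N ->
      H (invmx (nth 0 s i) *m nth 0 s j) -> i = j) /\
  (forall g, G g -> exists2 r, r \in s & H (invmx r *m g)).

Definition group_index (G H : 'M[R]_2 -> Prop) (n : nat) : Prop :=
  exists s, size s = n /\ coset_reps G H s.

End Hecke.

From Pilot Require Import Defs.
From HB Require Import structures.
From mathcomp Require Import all_boot all_order all_algebra.
From mathcomp Require Import all_classical all_reals all_analysis.
From mathcomp Require Import ring lra.
Import Order.TTheory GRing.Theory Num.Theory.
Local Open Scope ring_scope.

(* With [u a + v b = 1], the unipotent [T^k] is congruent modulo [pi0] to
   [T^(k u a)], which lies in [H(tau)]; the same holds for the lower unipotent
   [L^k = S T^k S^-1].  Since [lam^2 = lam + 1] makes [S] a word in [T^-1] and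
   [L^-1], every [M] in [H5] is congruent modulo [pi0] to some [A] in [H(tau)],
   and then [M = A (A^-1 M)] with [A^-1 M] in [H(pi0)].
   Left cosets of [H(al)] are congruence classes modulo [al]; there are finitely
   many of them because some positive integer lies in [(al)] and the entries lie
   in [Z + Z lam].  As [(tau) + (pi0)] contains [u a + v b = 1], congruence modulo
   [tau pi0] means congruence modulo both, and the decomposition [H5 = H(tau) H(pi0)]
   provides a Chinese remainder theorem for cosets, so the indices multiply. *)

Set Implicit Arguments.
Unset Strict Implicit.

Section Transversal.
Variables (T : eqType) (z0 : T) (e : T -> T -> Prop).
Hypotheses (e_refl : forall z : T, e z z) (e_sym : forall z w : T, e z w -> e w z).

Definition uniq_upto (s : seq T) := forall i j, (i < size s)%N -> (j < size s)%N ->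
  e (nth z0 s i) (nth z0 s j) -> i = j.

Lemma exists_transversal (l : seq T) : exists s, [/\ {subset s <= l}, uniq_upto s &
  forall w, w \in l -> exists2 r, r \in s & e r w].
Proof.
elim: l => [|z l [s [sl s_uniq s_cover]]].
  by exists [::]; split => // i j; rewrite ltn0.
have [[r0 r0s r0z] | z_new] := pselect (exists2 r, r \in s & e r z).
  exists s; split=> [r /sl | | w].
  - by rewrite inE orbC => ->.
  - exact: s_uniq.
  by rewrite inE => /predU1P[-> | /s_cover]; [exists r0|].
exists (z :: s); split=> [r | [|i] [|j] //= ? ? eij | w].
- by rewrite !inE => /predU1P[-> | /sl ->]; rewrite ?eqxx ?orbT.
- by case: z_new; exists (nth z0 s j); [apply: mem_nth | apply: e_sym].
- by case: z_new; exists (nth z0 s i); [apply: mem_nth|].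
- by congr S; apply: s_uniq.
rewrite inE => /predU1P[-> | /s_cover[r rs ry]]; first by exists z; rewrite ?inE ?eqxx.
by exists r; rewrite ?inE ?rs ?orbT.
Qed.

End Transversal.

Section InverseMatrix.
Variables (F : comUnitRingType) (n : nat).
Implicit Types A B : 'M[F]_n.

Lemma invmx_right A B : A *m B = 1%:M -> invmx A = B.
Proof.
move=> AB1; have [uA _] := mulmx1_unit AB1.
by rewrite -[B](mulKmx uA) AB1 mulmx1.
Qed.

Lemma invmxM A B : A \in unitmx -> B \in unitmx -> invmx (A *m B) = invmx B *m invmx A.
Proof.
move=> uA uB; apply: invmx_right.
by rewrite mulmxA -(mulmxA A) mulmxV // mulmx1 mulmxV.
Qed.

End InverseMatrix.

Section Hecke5.
Variable R : realType.
Local Notation M2 := 'M[R]_2.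
Local Notation lam := (@lam R).
Implicit Types (al x y : R) (A B M : M2).

Lemma lam_sqr : lam ^+ 2 = lam + 1.
Proof.
rewrite /Defs.lam; set x := pi / 5%:R; set c := cos x; set s := sin x.
have s2 : s ^+ 2 = 1 - c ^+ 2 by rewrite /s /c -(cos2Dsin2 x); ring.
(* [3x = pi - 2x] gives [cos 3x = - cos 2x], i.e. [(c + 1) (4c^2 - 2c - 1) = 0]. *)
have cos3x : cos (x + x + x) = - cos (x + x).
  have -> : x + x + x = pi - (x + x) by rewrite /x; field.
  by rewrite cosB cospi sinpi; ring.
rewrite !cosD !sinD -/c -/s in cos3x.
have c_gt0 : 0 < c.
  have pi_gt0 := pi_gt0 R.
  by apply: cos_gt0_pihalf; rewrite /x; apply/andP; split; lra.
have : (c + 1) * (4 * c ^+ 2 - 2 * c - 1) = 0.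
  have -> : (c + 1) * (4 * c ^+ 2 - 2 * c - 1) =
    (((c * c - s * s) * c - (s * c + c * s) * s) - (- (c * c - s * s)))
    + (3 * c + 1) * (s ^+ 2 - (1 - c ^+ 2)) by ring.
  by rewrite cos3x s2 !subrr mulr0 addr0.
move/eqP; rewrite mulf_eq0 => /orP[/eqP|/eqP quad]; first by lra.
by apply/eqP; rewrite -subr_eq0 -quad; apply/eqP; ring.
Qed.

Lemma inZl_int (k : int) : inZl (k%:~R : R).
Proof. by exists k, 0; rewrite mul0r addr0. Qed.

Lemma inZl0 : inZl (0 : R).
Proof. exact: inZl_int 0. Qed.

Lemma inZl1 : inZl (1 : R).
Proof. exact: inZl_int 1. Qed.

Lemma inZl_lam : inZl lam.
Proof. by exists 0, 1; rewrite mul1r add0r. Qed.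

Lemma inZlD x y : inZl x -> inZl y -> inZl (x + y).
Proof.
move=> [a [b ->]] [c [d ->]]; exists (a + c), (b + d).
by rewrite !rmorphD /=; ring.
Qed.

Lemma inZlN x : inZl x -> inZl (- x).
Proof. by move=> [a [b ->]]; exists (- a), (- b); rewrite !rmorphN /=; ring. Qed.

Lemma inZlM x y : inZl x -> inZl y -> inZl (x * y).
Proof.
move=> [a [b ->]] [c [d ->]]; exists (a * c + b * d), (a * d + b * c + b * d).
rewrite !rmorphD !rmorphM /=.
have -> : (a%:~R + b%:~R * lam) * (c%:~R + d%:~R * lam) =
   a%:~R * c%:~R + (a%:~R * d%:~R + b%:~R * c%:~R) * lam
   + b%:~R * d%:~R * lam ^+ 2 :> R by ring.
by rewrite lam_sqr; ring.
Qed.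

Lemma inIdeal0 al : inIdeal al 0.
Proof. by exists 0; rewrite mulr0; split => //; apply: inZl0. Qed.

Lemma inIdealD al x y : inIdeal al x -> inIdeal al y -> inIdeal al (x + y).
Proof.
move=> [z [Zz ->]] [w [Zw ->]]; exists (z + w).
by rewrite mulrDr; split => //; apply: inZlD.
Qed.

Lemma inIdealN al x : inIdeal al x -> inIdeal al (- x).
Proof. by move=> [z [Zz ->]]; exists (- z); rewrite mulrN; split => //; apply: inZlN. Qed.

Lemma inIdealMl al x y : inZl y -> inIdeal al x -> inIdeal al (y * x).
Proof.
by move=> Zy [z [Zz ->]]; exists (y * z); rewrite mulrCA; split => //; apply: inZlM.
Qed.

Lemma inIdealMr al x y : inZl y -> inIdeal al x -> inIdeal al (x * y).
Proof. by rewrite mulrC; apply: inIdealMl. Qed.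

Lemma inIdeal_mulz al (n : nat) (k : int) :
  inIdeal al n%:R -> inIdeal al (k * n)%:~R.
Proof. by rewrite rmorphM /= -pmulrn; apply: inIdealMl; apply: inZl_int. Qed.

Lemma inIdeal_mulz_lam al (n : nat) (k : int) :
  inIdeal al n%:R -> inIdeal al ((k * n)%:~R * lam).
Proof. by move=> /(inIdeal_mulz k); apply: inIdealMr; apply: inZl_lam. Qed.

Lemma inIdealM_comaximal t p e f : inZl t -> inZl p -> inZl e -> inZl f ->
  t * e + p * f = 1 -> forall x, inIdeal (t * p) x <-> inIdeal t x /\ inIdeal p x.
Proof.
move=> Zt Zp Ze Zf tepf1 x; split.
  move=> [z [Zz ->]]; split.
    by exists (p * z); rewrite mulrA; split => //; apply: inZlM.
  by exists (t * z); split; [apply: inZlM | ring].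
move=> [[z1 [Zz1 x_tz1]] [z2 [Zz2 x_pz2]]]; exists (e * z2 + f * z1).
split; first by apply: inZlD; apply: inZlM.
transitivity (t * e * x + p * f * x); first by rewrite -mulrDl tepf1 mul1r.
by rewrite {1}x_pz2 x_tz1; ring.
Qed.

Lemma ord2P (i : 'I_2) : i = 0 \/ i = 1.
Proof. by case: i => -[|[|//]] ?; [left|right]; apply: val_inj. Qed.

Lemma ord2_forall (P : 'I_2 -> 'I_2 -> Prop) :
  P 0 0 -> P 0 1 -> P 1 0 -> P 1 1 -> forall i j, P i j.
Proof. by move=> ? ? ? ? i j; case: (ord2P i) => ->; case: (ord2P j) => ->. Qed.

Definition mk2 (a b c d : R) : M2 := \matrix_(i < 2, j < 2)
  (if i == 0 then (if j == 0 then a else b) else (if j == 0 then c else d)).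

Lemma mulmx2E (A B : M2) i j : (A *m B) i j = A i 0 * B 0 j + A i 1 * B 1 j.
Proof.
have lift0 : lift ord0 (ord0 : 'I_1) = 1 :> 'I_2 by apply: val_inj.
by rewrite !mxE !big_ord_recl big_ord0 addr0 lift0.
Qed.

Lemma mulmx_mk2 a b c d e f g h :
  mk2 a b c d *m mk2 e f g h =
  mk2 (a * e + b * g) (a * f + b * h) (c * e + d * g) (c * f + d * h).
Proof.
apply/matrixP => i j; rewrite mulmx2E !mxE.
by case: (ord2P i) => ->; case: (ord2P j) => ->.
Qed.

Lemma mk2_1 : mk2 1 0 0 1 = 1%:M.
Proof. by apply/matrixP; apply: ord2_forall; rewrite !mxE. Qed.

Lemma Smat_mk2 : Smat R = mk2 0 1 (-1) 0.
Proof. by apply/matrixP; apply: ord2_forall; rewrite !mxE. Qed.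

Lemma Tmat_mk2 : Tmat R = mk2 1 lam 0 1.
Proof. by apply/matrixP; apply: ord2_forall; rewrite !mxE. Qed.

Definition Sinv : M2 := mk2 0 (-1) 1 0.
Definition Tpow (k : int) : M2 := mk2 1 (k%:~R * lam) 0 1.
Definition Lpow (k : int) : M2 := mk2 1 0 (- (k%:~R * lam)) 1.

Lemma mulmx_S_Sinv : Smat R *m Sinv = 1%:M.
Proof. by rewrite Smat_mk2 mulmx_mk2 -mk2_1; congr mk2; ring. Qed.

Lemma invmx_S : invmx (Smat R) = Sinv.
Proof. exact: invmx_right mulmx_S_Sinv. Qed.

Lemma invmx_S_cube : invmx (Smat R) = Smat R *m Smat R *m Smat R.
Proof. by rewrite invmx_S Smat_mk2 !mulmx_mk2; congr mk2; ring. Qed.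

Lemma TpowD k l : Tpow (k + l) = Tpow k *m Tpow l.
Proof. by rewrite /Tpow mulmx_mk2 rmorphD /=; congr mk2; ring. Qed.

Lemma Tpow0 : Tpow 0 = 1%:M.
Proof. by rewrite /Tpow mul0r mk2_1. Qed.

Lemma Tpow1 : Tpow 1 = Tmat R.
Proof. by rewrite /Tpow Tmat_mk2 mul1r. Qed.

Lemma mulmx_T_Tpow_N1 : Tmat R *m Tpow (-1) = 1%:M.
Proof. by rewrite -Tpow1 -TpowD addrN Tpow0. Qed.

Lemma invmx_T : invmx (Tmat R) = Tpow (-1).
Proof. exact: invmx_right mulmx_T_Tpow_N1. Qed.

Lemma Lpow0 : Lpow 0 = 1%:M.
Proof. by rewrite /Lpow mul0r oppr0 mk2_1. Qed.

Lemma Lpow_conj k : Lpow k = Smat R *m Tpow k *m Sinv.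
Proof. by rewrite Smat_mk2 /Tpow /Sinv !mulmx_mk2; congr mk2; ring. Qed.

(* The entries agree modulo the minimal polynomial [X^2 - X - 1] of [lam]. *)
Lemma S_word : Smat R = Tpow (-1) *m Lpow (-1) *m Tpow (-1) *m Lpow (-1) *m Tpow (-1).
Proof.
have mod_lam r p q : p - q = (lam ^+ 2 - lam - 1) * r -> p = q.
  by move=> pq; apply/eqP; rewrite -subr_eq0 pq lam_sqr addrAC addrK subrr mul0r.
rewrite Smat_mk2 !mulmx_mk2 !mulrN1z; congr mk2.
- by apply: (mod_lam (1 - lam - lam ^+ 2)); ring.
- by apply: (mod_lam (- (1 + 2 * lam - lam ^+ 2 - lam ^+ 3))); ring.
- by apply: (mod_lam (1 + lam)); ring.
- by apply: (mod_lam (1 - lam - lam ^+ 2)); ring.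
Qed.

Lemma H5_gens (g : M2) : gens g -> H5 g.
Proof. by move=> Gg; have := H5_mul Gg (@H5_one R); rewrite mulmx1. Qed.

Lemma H5_mulmx A B : H5 A -> H5 B -> H5 (A *m B).
Proof.
elim=> [|g M Gg _ IH] HB; first by rewrite mul1mx.
by rewrite -mulmxA; apply: H5_mul => //; apply: IH.
Qed.

Lemma H5S : H5 (Smat R). Proof. by apply: H5_gens; left. Qed.

Lemma H5Sinv : H5 (invmx (Smat R)). Proof. by apply: H5_gens; right; left. Qed.

Lemma H5_Tpow k : H5 (Tpow k).
Proof.
have H5_Tpow_nat n : H5 (Tpow n%:Z) /\ H5 (Tpow (- n%:Z)).
  elim: n => [|n [IHp IHn]]; first by rewrite oppr0 Tpow0; split; apply: H5_one.
  rewrite intS opprD !TpowD Tpow1 -invmx_T; split; apply: H5_mulmx => //;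
    by apply: H5_gens; rewrite /gens; tauto.
by case: k => n; [case: (H5_Tpow_nat n) | rewrite NegzE; case: (H5_Tpow_nat n.+1)].
Qed.

Lemma H5_Lpow k : H5 (Lpow k).
Proof.
rewrite Lpow_conj -invmx_S; apply: H5_mulmx; last exact: H5Sinv.
by apply: H5_mulmx; [apply: H5S|apply: H5_Tpow].
Qed.

Lemma gens_unitmx (g : M2) : gens g -> g \in unitmx.
Proof.
have [uS _] := mulmx1_unit mulmx_S_Sinv; have [uT _] := mulmx1_unit mulmx_T_Tpow_N1.
by case=> [->|[->|[->|->]]]; rewrite ?unitmx_inv.
Qed.

Lemma H5_unitmx A : H5 A -> A \in unitmx.
Proof.
elim=> [|g M Gg _ uM]; first exact: unitmx1.
by rewrite unitmx_mul uM gens_unitmx.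
Qed.

Lemma H5_invmx A : H5 A -> H5 (invmx A).
Proof.
elim=> [|g M Gg HM IH]; first by rewrite invmx1; apply: H5_one.
rewrite invmxM ?(gens_unitmx Gg) ?(H5_unitmx HM) //; apply: H5_mulmx => //.
by apply: H5_gens; case: Gg => [->|[->|[->|->]]]; rewrite ?invmxK /gens; tauto.
Qed.

Definition intmx (A : M2) := forall i j, inZl (A i j).

Lemma intmx_mk2 a b c d : inZl a -> inZl b -> inZl c -> inZl d -> intmx (mk2 a b c d).
Proof. by move=> ? ? ? ?; apply: ord2_forall; rewrite !mxE. Qed.

Lemma intmx_mul A B : intmx A -> intmx B -> intmx (A *m B).
Proof. by move=> ZA ZB i j; rewrite mulmx2E; apply: inZlD; apply: inZlM. Qed.

Lemma intmx1 : intmx 1%:M.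
Proof.
by rewrite -mk2_1; apply: intmx_mk2; [exact: inZl1|exact: inZl0|exact: inZl0|exact: inZl1].
Qed.

Lemma intmx_Tpow k : intmx (Tpow k).
Proof.
apply: intmx_mk2; [exact: inZl1| |exact: inZl0|exact: inZl1].
by apply: inZlM; [apply: inZl_int|apply: inZl_lam].
Qed.

Lemma intmx_gens (g : M2) : gens g -> intmx g.
Proof.
have Zm1 := inZlN inZl1.
case=> [->|[->|[->|->]]]; rewrite ?invmx_S ?invmx_T -?Tpow1 ?Smat_mk2; try exact: intmx_Tpow.
  by apply: intmx_mk2; [exact: inZl0|exact: inZl1|exact: Zm1|exact: inZl0].
by apply: intmx_mk2; [exact: inZl0|exact: Zm1|exact: inZl1|exact: inZl0].
Qed.

Lemma H5_intmx A : H5 A -> intmx A.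
Proof.
elim=> [|g M Gg _ IH]; first exact: intmx1.
by apply: intmx_mul => //; apply: intmx_gens.
Qed.

Definition congmx al A B := forall i j, inIdeal al (A i j - B i j).

Lemma congmx_refl al A : congmx al A A.
Proof. by move=> i j; rewrite subrr; apply: inIdeal0. Qed.

Lemma congmx_sym al A B : congmx al A B -> congmx al B A.
Proof. by move=> AB i j; rewrite -opprB; apply: inIdealN. Qed.

Lemma congmx_trans al A B C : congmx al A B -> congmx al B C -> congmx al A C.
Proof.
move=> AB BC i j; have -> : A i j - C i j = (A i j - B i j) + (B i j - C i j) by ring.
exact: inIdealD.
Qed.

Lemma congmx_mull al A B C : intmx A -> congmx al B C -> congmx al (A *m B) (A *m C).
Proof.
move=> ZA BC i j; rewrite !mulmx2E.
have -> : A i 0 * B 0 j + A i 1 * B 1 j - (A i 0 * C 0 j + A i 1 * C 1 j) =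
  A i 0 * (B 0 j - C 0 j) + A i 1 * (B 1 j - C 1 j) by ring.
by apply: inIdealD; apply: inIdealMl.
Qed.

Lemma congmx_mulr al A B C : intmx C -> congmx al A B -> congmx al (A *m C) (B *m C).
Proof.
move=> ZC AB i j; rewrite !mulmx2E.
have -> : A i 0 * C 0 j + A i 1 * C 1 j - (B i 0 * C 0 j + B i 1 * C 1 j) =
  (A i 0 - B i 0) * C 0 j + (A i 1 - B i 1) * C 1 j by ring.
by apply: inIdealD; apply: inIdealMr.
Qed.

Lemma congmx_mul al A A' B B' : intmx A -> intmx B' ->
  congmx al A B -> congmx al A' B' -> congmx al (A *m A') (B *m B').
Proof.
move=> ZA ZB' AB A'B'.
exact: congmx_trans (congmx_mull ZA A'B') (congmx_mulr ZB' AB).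
Qed.

Lemma HcongE al M : Hcong al M <-> H5 M /\ congmx al M 1%:M.
Proof.
split=> [[HM [c00 [c11 [c01 c10]]]] | [HM cM]].
  by split => //; apply: ord2_forall; rewrite !mxE /= ?subr0.
by split => //; move: (cM 0 0) (cM 1 1) (cM 0 1) (cM 1 0); rewrite !mxE /= ?subr0.
Qed.

Lemma Hcong_cosetE al A B : H5 A -> H5 B ->
  Hcong al (invmx A *m B) <-> congmx al A B.
Proof.
move=> HA HB; have uA := H5_unitmx HA; rewrite HcongE; split.
  move=> [_ /(congmx_mull (H5_intmx HA))].
  by rewrite mulKVmx // mulmx1 => /congmx_sym.
move=> AB; split; first by apply: H5_mulmx => //; apply: H5_invmx.
have := congmx_mull (H5_intmx (H5_invmx HA)) (congmx_sym AB).
by rewrite mulVmx.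
Qed.

Lemma congmx_Tpow al k l : inIdeal al ((k - l)%:~R * lam) -> congmx al (Tpow k) (Tpow l).
Proof.
move=> kl; apply: ord2_forall; rewrite !mxE /= ?subrr; try exact: inIdeal0.
by rewrite -mulrBl -rmorphB.
Qed.

Lemma congmx_Lpow al k l : inIdeal al ((k - l)%:~R * lam) -> congmx al (Lpow k) (Lpow l).
Proof.
move=> /inIdealN kl; apply: ord2_forall; rewrite !mxE /= ?subrr; try exact: inIdeal0.
suff -> : - (k%:~R * lam) - - (l%:~R * lam) = - ((k - l)%:~R * lam) by [].
by rewrite rmorphB /=; ring.
Qed.

Definition congr_Hcong t p M :=
  exists A, H5 A /\ congmx t A 1%:M /\ congmx p A M.

Lemma congr_Hcong1 t p : congr_Hcong t p 1%:M.
Proof. by exists 1%:M; split; [apply: H5_one | split; apply: congmx_refl]. Qed.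

Lemma congr_HcongM t p M N : H5 N ->
  congr_Hcong t p M -> congr_Hcong t p N -> congr_Hcong t p (M *m N).
Proof.
move=> HN [A [HA [A1 AM]]] [B [HB [B1 BN]]]; exists (A *m B).
split; first exact: H5_mulmx.
split; last exact: congmx_mul (H5_intmx HA) (H5_intmx HN) AM BN.
by rewrite -[1%:M]mulmx1; apply: congmx_mul (H5_intmx HA) intmx1 A1 B1.
Qed.

Section Decomposition.
Variables (t p : R) (a b : nat) (u v : int).
Hypotheses (t_a : inIdeal t a%:R) (p_b : inIdeal p b%:R) (bezout : u * a + v * b = 1).

(* [k = k u a + k v b], so [k u a] is [0] modulo [t] and [k] modulo [p]. *)
Lemma bezout_split k :
  inIdeal t ((k * u * a)%:~R * lam) /\ inIdeal p ((k * u * a - k)%:~R * lam).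
Proof.
split; first exact: inIdeal_mulz_lam.
have -> : k * u * a - k = - (k * v) * b.
  by rewrite -[X in _ - X]mulr1 -bezout; ring.
exact: inIdeal_mulz_lam.
Qed.

Lemma congr_Hcong_Tpow k : congr_Hcong t p (Tpow k).
Proof.
have [ta0 pak] := bezout_split k; exists (Tpow (k * u * a)).
by split; [apply: H5_Tpow | rewrite -Tpow0; split; apply: congmx_Tpow; rewrite ?subr0].
Qed.

Lemma congr_Hcong_Lpow k : congr_Hcong t p (Lpow k).
Proof.
have [ta0 pak] := bezout_split k; exists (Lpow (k * u * a)).
by split; [apply: H5_Lpow | rewrite -Lpow0; split; apply: congmx_Lpow; rewrite ?subr0].
Qed.

Lemma congr_Hcong_S : congr_Hcong t p (Smat R).
Proof.
have := congr_Hcong_Tpow (-1); have := congr_Hcong_Lpow (-1).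
have := H5_Tpow (-1); have := H5_Lpow (-1).
by rewrite S_word => *; repeat apply: congr_HcongM.
Qed.

Lemma H5_congr_Hcong M : H5 M -> congr_Hcong t p M.
Proof.
elim=> [|g N Gg HN IH]; first exact: congr_Hcong1.
apply: congr_HcongM => //; case: Gg => [->|[->|[->|->]]].
- exact: congr_Hcong_S.
- have := congr_Hcong_S; have := H5S.
  by rewrite invmx_S_cube => *; repeat apply: congr_HcongM.
- by rewrite -Tpow1; apply: congr_Hcong_Tpow.
- by rewrite invmx_T; apply: congr_Hcong_Tpow.
Qed.

Lemma H5_Hcong_mul M : H5 M <-> exists A B, Hcong t A /\ Hcong p B /\ M = A *m B.
Proof.
split=> [HM | [A [B [[HA _] [[HB _] ->]]]]]; last exact: H5_mulmx.
have [A [HA [A1 AM]]] := H5_congr_Hcong HM.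
exists A, (invmx A *m M); split; first exact/HcongE.
by split; [apply/Hcong_cosetE | rewrite mulKVmx // H5_unitmx].
Qed.

End Decomposition.

Lemma coset_repsE al s : coset_reps (@H5 R) (Hcong al) s <->
  [/\ forall r, r \in s -> H5 r, uniq_upto 0 (congmx al) s &
      forall g, H5 g -> exists2 r, r \in s & congmx al r g].
Proof.
have H5_nth i : (forall r, r \in s -> H5 r) -> (i < size s)%N -> H5 (nth 0 s i).
  by move=> Hs /(mem_nth 0); apply: Hs.
split=> [[Hs [s_uniq s_cover]] | [Hs s_uniq s_cover]]; split=> //.
- move=> i j ? ? /Hcong_cosetE eij; apply: s_uniq => //; apply: eij; exact: H5_nth.
- move=> g Hg; have [r rs /Hcong_cosetE rg] := s_cover g Hg.
  by exists r => //; apply: rg => //; apply: Hs.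
split=> [i j ? ? /Hcong_cosetE eij | g Hg].
  by apply: s_uniq => //; apply: eij; exact: H5_nth.
by have [r rs rg] := s_cover g Hg; exists r => //; apply/Hcong_cosetE => //; apply: Hs.
Qed.

Definition Zl_coord x : int * int :=
  xget (0, 0) [set uv | x = uv.1%:~R + uv.2%:~R * lam].

Lemma Zl_coordP x : inZl x -> x = (Zl_coord x).1%:~R + (Zl_coord x).2%:~R * lam.
Proof.
move=> [u [v xuv]]; rewrite /Zl_coord.
by case: xgetP => [uv _ // | NP]; case: (NP (u, v) xuv).
Qed.

Section FiniteIndex.
Variable m : nat.

Definition residue (u : int) : 'I_m.+1 := inord `|(u %% m.+1)%Z|%N.

Lemma residue_eq u u' : residue u = residue u' -> exists q : int, u - u' = q * m.+1%:Z.
Proof.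
have mod_lt w : (`|(w %% m.+1)%Z| < m.+1)%N.
  by rewrite -ltz_nat gez0_abs ?modz_ge0 // ltz_pmod.
move/(congr1 val); rewrite /= !inordK // => /(congr1 Posz).
rewrite !gez0_abs ?modz_ge0 // => /eqP; rewrite eqz_mod_dvd.
by move/dvdzP.
Qed.

Definition residue_key M : {ffun 'I_2 * 'I_2 -> 'I_m.+1 * 'I_m.+1} :=
  [ffun ij => (residue (Zl_coord (M ij.1 ij.2)).1, residue (Zl_coord (M ij.1 ij.2)).2)].

Lemma residue_key_congmx al M N : inIdeal al m.+1%:R -> intmx M -> intmx N ->
  residue_key M = residue_key N -> congmx al M N.
Proof.
move=> al_m ZM ZN /ffunP MN i j; move: (MN (i, j)); rewrite !ffunE /=.
case=> /residue_eq [q e1] /residue_eq [q' e2].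
rewrite [M i j]Zl_coordP // [N i j]Zl_coordP //.
set c := Zl_coord (M i j); set d := Zl_coord (N i j).
have -> : c.1%:~R + c.2%:~R * lam - (d.1%:~R + d.2%:~R * lam) =
          (c.1 - d.1)%:~R + (c.2 - d.2)%:~R * lam :> R by rewrite !rmorphB /=; ring.
by rewrite e1 e2; apply: inIdealD; [apply: inIdeal_mulz | apply: inIdeal_mulz_lam].
Qed.

Lemma finite_index al : inIdeal al m.+1%:R -> exists n, group_index (@H5 R) (Hcong al) n.
Proof.
move=> al_m.
pose pick k := xget 1%:M [set M | H5 M /\ residue_key M = k].
have H5_pick k : H5 (pick k).
  by rewrite /pick; case: xgetP => [M _ [HM _] | _]; [exact: HM | exact: H5_one].
have pick_key g : H5 g -> residue_key (pick (residue_key g)) = residue_key g.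
  by move=> Hg; rewrite /pick; case: xgetP => [M _ [_ ->] // | NP]; case: (NP g).
have [s [sl s_uniq s_cover]] := exists_transversal 0 (@congmx_refl al) (@congmx_sym al)
  [seq pick k | k <- enum {: {ffun 'I_2 * 'I_2 -> 'I_m.+1 * 'I_m.+1}}].
have Hs r : r \in s -> H5 r by move/sl/mapP => [k _ ->].
exists (size s), s; split => //; apply/coset_repsE; split => // g Hg.
have [|r rs r_pick] := s_cover (pick (residue_key g)); first by apply: map_f; rewrite mem_enum.
exists r => //; apply: congmx_trans r_pick _.
by apply: residue_key_congmx; rewrite ?pick_key //; apply: H5_intmx.
Qed.

End FiniteIndex.

Section ChineseRemainder.
Variables (t p : R).
Hypothesis H5_Hcong_mul : forall M, H5 M -> exists A B, Hcong t A /\ Hcong p B /\ M = A *m B.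
Hypothesis inIdeal_tp : forall x, inIdeal (t * p) x <-> inIdeal t x /\ inIdeal p x.

Lemma congmx_tp A B : congmx (t * p) A B <-> congmx t A B /\ congmx p A B.
Proof.
split=> [AB | [ABt ABp] i j]; last exact/inIdeal_tp.
by split=> i j; have /inIdeal_tp[] := AB i j.
Qed.

Lemma exists_crt r1 r2 : H5 r1 -> H5 r2 -> exists g, [/\ H5 g, congmx t g r1 & congmx p g r2].
Proof.
move=> Hr1 Hr2.
have [A [B [/HcongE[HA A1] [/HcongE[HB B1] r12]]]] :=
  H5_Hcong_mul (H5_mulmx (H5_invmx Hr1) Hr2).
have Binv1 : congmx p (invmx B) 1%:M.
  have := proj2 (Hcong_cosetE p HB (@H5_one R)) B1.
  by rewrite mulmx1 => /HcongE[].
have r1A : r1 *m A = r2 *m invmx B.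
  by rewrite -[r2](mulKVmx (H5_unitmx Hr1)) r12 mulmxA mulmxK // H5_unitmx.
exists (r1 *m A); split; first exact: H5_mulmx.
  by rewrite -[r1 in congmx _ _ r1]mulmx1; apply: congmx_mull => //; apply: H5_intmx.
by rewrite r1A -[r2 in congmx _ _ r2]mulmx1; apply: congmx_mull => //; apply: H5_intmx.
Qed.

Definition crt r1 r2 := xget 1%:M [set g | [/\ H5 g, congmx t g r1 & congmx p g r2]].

Lemma crtP r1 r2 : H5 r1 -> H5 r2 ->
  [/\ H5 (crt r1 r2), congmx t (crt r1 r2) r1 & congmx p (crt r1 r2) r2].
Proof.
move=> Hr1 Hr2; have [g gP] := exists_crt Hr1 Hr2.
by rewrite /crt; case: xgetP => [h _ // | NP]; case: (NP g gP).
Qed.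

(* The representatives of [H(t p)] are indexed by [k < n1 n2], encoding the pair
   [(k %/ n2, k %% n2)] of indices of representatives of [H(t)] and [H(p)]. *)
Lemma group_indexM n1 n2 : group_index (@H5 R) (Hcong t) n1 ->
  group_index (@H5 R) (Hcong p) n2 -> group_index (@H5 R) (Hcong (t * p)) (n1 * n2).
Proof.
move=> [s1 [size_s1 /coset_repsE[Hs1 s1_uniq s1_cover]]].
move=> [s2 [size_s2 /coset_repsE[Hs2 s2_uniq s2_cover]]].
subst n1 n2; set n1 := size s1; set n2 := size s2.
have n2_gt0 : (0 < n2)%N.
  have [r rs _] := s2_cover _ (@H5_one R).
  by rewrite lt0n size_eq0; apply: contraTneq rs => ->.
pose f k := crt (nth 0 s1 (k %/ n2)) (nth 0 s2 (k %% n2)).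
have fP k : (k < n1 * n2)%N ->
    [/\ H5 (f k), congmx t (f k) (nth 0 s1 (k %/ n2)) & congmx p (f k) (nth 0 s2 (k %% n2))].
  move=> k_lt; apply: crtP.
    by apply/Hs1/mem_nth; rewrite ltn_divLR.
  by apply/Hs2/mem_nth; rewrite ltn_pmod.
exists (mkseq f (n1 * n2)); split; first by rewrite size_mkseq.
apply/coset_repsE; split.
- by move=> r /mapP[k]; rewrite mem_iota => /andP[_ /fP[]] ? _ _ ->.
- move=> i j; rewrite size_mkseq => i_lt j_lt.
  rewrite !nth_mkseq // => /congmx_tp[ij_t ij_p].
  have [_ i_t i_p] := fP i i_lt; have [_ j_t j_p] := fP j j_lt.
  rewrite (divn_eq i n2) (divn_eq j n2); congr (_ * _ + _)%N.
    apply: s1_uniq; rewrite -?/n1 ?ltn_divLR //.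
    exact: congmx_trans (congmx_sym i_t) (congmx_trans ij_t j_t).
  apply: s2_uniq; rewrite -?/n2 ?ltn_pmod //.
  exact: congmx_trans (congmx_sym i_p) (congmx_trans ij_p j_p).
move=> g Hg; have [r1 r1s r1g] := s1_cover g Hg; have [r2 r2s r2g] := s2_cover g Hg.
pose k := (index r1 s1 * n2 + index r2 s2)%N.
have k_div : (k %/ n2 = index r1 s1)%N by rewrite divnMDl // divn_small ?addn0 ?index_mem.
have k_mod : (k %% n2 = index r2 s2)%N by rewrite modnMDl modn_small ?index_mem.
have k_lt : (k < n1 * n2)%N by rewrite -ltn_divLR // k_div index_mem.
exists (f k); first by apply: map_f; rewrite mem_iota.
have [_] := fP k k_lt; rewrite k_div k_mod !nth_index // => k_t k_p.
by apply/congmx_tp; split; [apply: congmx_trans r1g | apply: congmx_trans r2g].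
Qed.

End ChineseRemainder.

End Hecke5.

Unset Implicit Arguments.
Set Strict Implicit.

Theorem lemma4p1 (R : realType) (tau pi0 : R) (a b : nat) :
  inZl tau -> inZl pi0 -> tau != 0 -> pi0 != 0 ->
  least_pos_int tau a -> least_pos_int pi0 b -> coprime a b ->
  (forall M : 'M[R]_2, H5 M <->
     exists A B, Hcong tau A /\ Hcong pi0 B /\ M = A *m B) /\
  exists n1 n2 : nat,
    group_index (@H5 R) (Hcong tau) n1 /\
    group_index (@H5 R) (Hcong pi0) n2 /\
    group_index (@H5 R) (Hcong (tau * pi0)) (n1 * n2).
Proof.
move=> Ztau Zpi0 _ _ [a_gt0 [tau_a _]] [b_gt0 [pi0_b _]] coprime_ab.
have [[u v] /= bezout] : exists uv : int * int, uv.1 * a + uv.2 * b = 1.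
  exact/coprimezP.
have decomp := H5_Hcong_mul tau_a pi0_b bezout.
have [n1 index1] : exists n, group_index (@H5 R) (Hcong tau) n.
  by apply: (finite_index (m := a.-1)); rewrite prednK.
have [n2 index2] : exists n, group_index (@H5 R) (Hcong pi0) n.
  by apply: (finite_index (m := b.-1)); rewrite prednK.
have [[za [Zza a_tau]] [zb [Zzb b_pi0]]] := (tau_a, pi0_b).
have comaximal : tau * (u%:~R * za) + pi0 * (v%:~R * zb) = 1.
  transitivity ((u * a + v * b)%:~R : R); last by rewrite bezout.
  by rewrite rmorphD !rmorphM /= -!pmulrn a_tau b_pi0; ring.
split=> //; exists n1, n2; do 2 split=> //.
apply: group_indexM index1 index2 => [M /decomp //|].
by apply: inIdealM_comaximal comaximal => //; apply: inZlM => //; apply: inZl_int.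
Qed.
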